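(* Let $\mathcal{Y}=\{y_1,\dots,y_{n+1}\}\subset\mathbb{R}^n$ be affinely independent, $y_0\in\mathbb{R}^n$, $L>0$, with notation as in the context. Define $M=\operatorname{diag}(\ell_+)\,Y_+P_-(Y_-P_-)^{-1}\in\mathbb{R}^{|\mathcal{I}_+|\times(|\mathcal{I}_-|-1)}$ and real numbers $\{\mu_{ij}\}_{i\in\mathcal{I}_+,\,j\in\mathcal{I}_-}$ by $\mu_{ij}=[M]_{i,\,(j-n-2+|\mathcal{I}_-|)}$ for $(i,j)\in\mathcal{I}_+\times(\mathcal{I}_-\setminus\{0\})$ and $\mu_{i0}=\ell_i-\sum_{j\in\mathcal{I}_-\setminus\{0\}}\mu_{ij}$ for $i\in\mathcal{I}_+$. Then $$\sum_{j\in\mathcal{I}_-}\mu_{ij}=\ell_i\ \ (i\in\mathcal{I}_+),\qquad \sum_{i\in\mathcal{I}_+}\mu_{ij}=-\ell_j\ \ (j\in\mathcal{I}_-),$$ $$(LI-H^\star)\sum_{j\in\mathcal{I}_-}\mu_{ij}y_j=(LI-H^\star)\ell_iy_i\ \ (i\in\mathcal{I}_+),\qquad (LI+H^\star)\sum_{i\in\mathcal{I}_+}\mu_{ij}y_i=-(LI+H^\star)\ell_jy_j\ \ (j\in\mathcal{I}_-).$$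
   Context: The barycentric coordinates of $y_0$ w.r.t. $\mathcal{Y}$ are the unique reals $\ell_1,\dots,\ell_{n+1}$ with $\sum_{i=1}^{n+1}\ell_i=1$, $\sum_{i=1}^{n+1}\ell_iy_i=y_0$; set $\ell_0=-1$. The points are ordered so that $\ell_1\ge\cdots\ge\ell_{n+1}$. Let $\mathcal{I}_+=\{i\in\{0,\dots,n+1\}:\ell_i>0\}=\{1,\dots,|\mathcal{I}_+|\}$, $\mathcal{I}_-=\{i\in\{0,\dots,n+1\}:\ell_i<0\}=\{0\}\cup\{n+3-|\mathcal{I}_-|,\dots,n+1\}$. Let $G=\sum_{i=0}^{n+1}\ell_iy_iy_i^T$, with eigendecomposition $G=P\Lambda P^T$ ($P$ orthogonal, $\Lambda$ diagonal); $G$ has $|\mathcal{I}_+|-1$ positive and $|\mathcal{I}_-|-1$ negative eigenvalues. Let $P_+$ (resp. $P_-$) be the $n\times(|\mathcal{I}_+|-1)$ (resp. $n\times(|\mathcal{I}_-|-1)$) matrix of columns of $P$ belonging to positive (resp. negative) eigenvalues, and $H^\star=L\,P\,\mathrm{sign}(\Lambda)P^T=L(P_+P_+^T-P_-P_-^T)$ (entrywise sign, $\mathrm{sign}(0)=0$). Let $Y\in\mathbb{R}^{(n+1)\times n}$ have $i$th row $(y_i-y_0)^T$; $Y_+$ consists of its first $|\mathcal{I}_+|$ rows and $Y_-$ of its last $|\mathcal{I}_-|-1$ rows. Let $\ell_+=(\ell_1,\dots,\ell_{|\mathcal{I}_+|})^T$. The matrix $Y_-P_-$ is invertible. *)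

From HB Require Import structures.
From mathcomp Require Import all_boot all_order all_algebra.
Set Implicit Arguments. Unset Strict Implicit. Unset Printing Implicit Defensive.
Import Order.TTheory GRing.Theory Num.Theory.
Local Open Scope ring_scope.

Section Lemma4p3Defs.
Variables (R : realFieldType) (n : nat).

(* Points are indexed by nat: y 0 = y_0, y 1 .. y (n+1) = the set Y.
   Vectors of R^n are column vectors 'cV[R]_n. *)

Definition affinely_independent (y : nat -> 'cV[R]_n) : bool :=
  row_free (\matrix_(i < n) (y i.+2 - y 1%N)^T).

Definition Iplus (ell : nat -> R) : seq nat := [seq i <- iota 0 n.+2 | 0 < ell i].
Definition Iminus (ell : nat -> R) : seq nat := [seq i <- iota 0 n.+2 | ell i < 0].

Definition Gmx (ell : nat -> R) (y : nat -> 'cV[R]_n) : 'M[R]_n :=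
  \sum_(0 <= i < n.+2) ell i *: (y i *m (y i)^T).

Definition Hstar (L : R) (P : 'M[R]_n) (lam : 'rV[R]_n) : 'M[R]_n :=
  L *: (P *m diag_mx (map_mx Num.sg lam) *m P^T).

Definition negidx (lam : 'rV[R]_n) : seq 'I_n := [seq k <- enum 'I_n | lam 0 k < 0].

Definition Pminus (P : 'M[R]_n) (lam : 'rV[R]_n) (m : nat) : 'M[R]_(n, m) :=
  \matrix_(i < n, k < m) P i (nth i (negidx lam) k).

(* Y_+ : first p rows of Y (rows (y_i - y_0)^T, i = 1..p) *)
Definition Yplus (y : nat -> 'cV[R]_n) (p : nat) : 'M[R]_(p, n) :=
  \matrix_(k < p) (y k.+1 - y 0%N)^T.

(* Y_- : last m rows of Y (rows (y_i - y_0)^T, i = n+2-m .. n+1) *)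
Definition Yminus (y : nat -> 'cV[R]_n) (m : nat) : 'M[R]_(m, n) :=
  \matrix_(k < m) (y (n.+2 - m + k)%N - y 0%N)^T.

Definition Mmx (ell : nat -> R) (y : nat -> 'cV[R]_n) (P : 'M[R]_n) (lam : 'rV[R]_n)
  : 'M[R]_(size (Iplus ell), (size (Iminus ell)).-1) :=
  let p := size (Iplus ell) in
  let m := (size (Iminus ell)).-1 in
  diag_mx (\row_(k < p) ell k.+1) *m Yplus y p *m Pminus P lam m
    *m invmx (Yminus y m *m Pminus P lam m).

(* entry (r, c) (0-based) of a matrix, 0 outside the range *)
Definition mxget (a b : nat) (A : 'M[R]_(a, b)) (r c : nat) : R :=
  match @insub _ (fun k => k < a)%N _ r, @insub _ (fun k => k < b)%N _ c with
  | Some r', Some c' => A r' c'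
  | _, _ => 0
  end.

(* mu_{ij} = [M]_{i, j-n-2+|I_-|} (1-based) for j in I_- \ {0};
   mu_{i0} = ell_i - sum_{j in I_- \ {0}} mu_{ij}. *)
Definition mu (ell : nat -> R) (y : nat -> 'cV[R]_n) (P : 'M[R]_n) (lam : 'rV[R]_n)
  (i j : nat) : R :=
  let m := (size (Iminus ell)).-1 in
  let entry (i j : nat) := mxget (Mmx ell y P lam) i.-1 (j - (n.+2 - m))%N in
  if j == 0%N then ell i - \sum_(j' <- Iminus ell | j' != 0%N) entry i j'
  else entry i j.

End Lemma4p3Defs.

From Pilot Require Import Defs.
From HB Require Import structures.
From mathcomp Require Import all_boot all_order all_algebra.
From mathcomp Require Import zify ring.
Set Implicit Arguments. Unset Strict Implicit. Unset Printing Implicit Defensive.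
Import Order.TTheory GRing.Theory Num.Theory.
Local Open Scope ring_scope.

(* Write u_i = y_i - y_0 and D_+, D_- for the diagonal matrices of l_+, l_-.
   By affine independence, sum_i l_i u_i = 0 is the only linear relation among
   the u_i; hence G = sum_i l_i u_i u_i^T = Y_+^T D_+ Y_+ + Y_-^T D_- Y_-, every
   null vector of G is orthogonal to the u_i with l_i <> 0, and
   l_+^T Y_+ = - l_-^T Y_-, which makes the column sums of M equal to - l_-.
   Up to a translation by y_0, the vectors in the last two identities are the
   columns of V = Y_-^T M^T - Y_+^T D_+ and of W = Y_+^T M + Y_-^T D_-
   = G P_- (Y_- P_-)^-1 (for j = 0, minus the sum of the other columns of W).
   As L I +- H* = L P (I +- sign Lambda) P^T, it remains to see that W is
   orthogonal to the eigenvectors with eigenvalue >= 0, which holds because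
   P^T G P_- only has nonzero rows at negative eigenvalues, and V to those with
   eigenvalue <= 0: P_-^T V = 0 by the definition of M, and null vectors of G
   are annihilated by Y_+ and Y_-. *)

Lemma big_iota_ord (V : nmodType) s c (F : nat -> V) :
  \sum_(i <- iota s c) F i = \sum_(k < c) F (s + k)%N.
Proof.
rewrite -[s in iota s]addn0 iotaDl big_map.
by rewrite -(big_mkord xpredT (fun k => F (s + k)%N)) /index_iota subn0.
Qed.

Lemma filter_iota_prefix (a : pred nat) s l :
  (forall i j, (s <= i <= j)%N -> (j < s + l)%N -> a j -> a i) ->
  filter a (iota s l) = iota s (count a (iota s l)).
Proof.
elim: l s => [//|l IHl] s a_down /=.
have {}IHl : filter a (iota s.+1 l) = iota s.+1 (count a (iota s.+1 l)).
  by apply: IHl => i j ij jl; apply: a_down; lia.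
rewrite IHl; case: ifP => [//|as_]; case E: count => [//|c].
have : s.+1 \in filter a (iota s.+1 l) by rewrite IHl E inE eqxx.
rewrite mem_filter mem_iota => /and3P [as1 _ sl].
by rewrite (a_down s s.+1) in as_ => //; lia.
Qed.

Lemma filter_iota_suffix (b : pred nat) s l :
  (forall i j, (s <= i <= j)%N -> (j < s + l)%N -> b i -> b j) ->
  filter b (iota s l) = iota (s + l - count b (iota s l)) (count b (iota s l)).
Proof.
elim: l s => [//|l IHl] s b_up /=.
case: ifP => bs /=; last first.
  by rewrite IHl ?addnS // => i j ij jl; apply: b_up; lia.
have allb : all b (iota s.+1 l).
  by apply/allP => j; rewrite mem_iota => jsl; apply: (b_up s); lia.
rewrite (all_filterP allb); move: allb; rewrite all_count size_iota => /eqP ->.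
by rewrite add1n addnS subSS addnK.
Qed.

Lemma big_nat1_ord (V : nmodType) n (F : nat -> V) :
  \sum_(1 <= i < n.+2) F i = F 1%N + \sum_(k < n) F k.+2.
Proof. by rewrite big_nat_recl // big_add1 /= big_mkord. Qed.

Lemma sum_scalerBr (R : pzRingType) (V : lmodType R) I (r : seq I) (a : I -> R)
    (v : I -> V) (w : V) :
  \sum_(i <- r) a i *: (v i - w) = \sum_(i <- r) a i *: v i - (\sum_(i <- r) a i) *: w.
Proof. by rewrite scaler_suml -sumrB; apply: eq_bigr => i _; rewrite scalerBr. Qed.

Lemma mxgetE (R : realFieldType) a b (A : 'M[R]_(a, b)) (r : 'I_a) (c : 'I_b) :
  mxget A r c = A r c.
Proof. by rewrite /mxget !valK. Qed.

Lemma col_mulmx_sum (R : comPzRingType) q r s (A : 'M[R]_(q, r)) (B : 'M[R]_(r, s)) c :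
  col c (A *m B) = \sum_k B k c *: col k A.
Proof.
by apply/colP => i; rewrite !mxE summxE; apply: eq_bigr => k _; rewrite !mxE mulrC.
Qed.

Lemma col_mul_diag (R : comPzRingType) q r (A : 'M[R]_(q, r)) (d : 'rV[R]_r) c :
  col c (A *m diag_mx d) = d 0 c *: col c A.
Proof. by apply/colP => i; rewrite mul_mx_diag !mxE mulrC. Qed.

Lemma big_sign_split (R : realDomainType) (V : nmodType) (f : nat -> R) (F : nat -> V) r :
  (forall i, f i = 0 -> F i = 0) ->
  \sum_(i <- r) F i = \sum_(i <- [seq i <- r | 0 < f i]) F i
                      + \sum_(i <- [seq i <- r | f i < 0]) F i.
Proof.
move=> F0; elim: r => [|i r IHr]; first by rewrite !big_nil addr0.
rewrite /= big_cons IHr; case: (ltgtP (f i) 0) => fi.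
- by rewrite big_cons addrCA.
- by rewrite big_cons addrA.
- by rewrite F0 // add0r.
Qed.

Lemma col_mulmx (R : pzSemiRingType) q r s (A : 'M[R]_(q, r)) (B : 'M[R]_(r, s)) c :
  col c (A *m B) = A *m col c B.
Proof. by rewrite !colE mulmxA. Qed.

Lemma mulmx_tr_diag (R : comPzRingType) q r (X : 'M[R]_(q, r)) (d : 'rV[R]_q) :
  X^T *m diag_mx d *m X = \sum_k d 0 k *: ((row k X)^T *m row k X).
Proof.
apply/matrixP => a b; rewrite -mulmxA mul_diag_mx summxE !mxE.
by apply: eq_bigr => k _; rewrite !mxE big_ord1 !mxE mulrCA.
Qed.

Section AffineIndependence.
Variables (R : realFieldType) (n : nat) (y : nat -> 'cV[R]_n).
Hypothesis hY : affinely_independent y.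

Lemma affine_dependence_eq0 (b : nat -> R) :
  \sum_(1 <= i < n.+2) b i = 0 -> \sum_(1 <= i < n.+2) b i *: y i = 0 ->
  forall i, (0 < i < n.+2)%N -> b i = 0.
Proof.
move=> sb sby.
have b2 : \row_(k < n) b k.+2 = 0.
  apply: (row_free_inj hY); rewrite mul0mx mulmx_sum_row.
  have : \sum_(1 <= i < n.+2) b i *: (y i - y 1%N) = 0.
    by rewrite sum_scalerBr sb scale0r sby subr0.
  rewrite big_nat1_ord subrr scaler0 add0r => /(congr1 trmx); rewrite trmx0 => e.
  by rewrite -[RHS]e linear_sum; apply: eq_bigr => k _; rewrite rowK mxE linearZ.
have bk (k : 'I_n) : b k.+2 = 0 by have /rowP/(_ k) := b2; rewrite !mxE.
case=> [//|[_|i iN]]; last exact: (bk (@Ordinal n i iN)).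
by move: sb; rewrite big_nat1_ord big1 ?addr0 // => k _; apply: bk.
Qed.

End AffineIndependence.

Section Barycentric.
Variables (R : realFieldType) (n : nat) (y : nat -> 'cV[R]_n) (ell : nat -> R).
Hypotheses (hY : affinely_independent y)
  (hsum : \sum_(1 <= i < n.+2) ell i = 1)
  (hbar : \sum_(1 <= i < n.+2) ell i *: y i = y 0%N)
  (h0 : ell 0%N = -1).

Local Notation u i := (y i - y 0%N).

Lemma sum_ell_eq0 : \sum_(0 <= i < n.+2) ell i = 0.
Proof. by rewrite big_ltn // h0 hsum addNr. Qed.

Lemma sum_ell_scale_eq0 : \sum_(0 <= i < n.+2) ell i *: y i = 0.
Proof. by rewrite big_ltn // h0 hbar scaleN1r addNr. Qed.

Lemma sum_ell_scale_shift_eq0 : \sum_(0 <= i < n.+2) ell i *: u i = 0.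
Proof. by rewrite sum_scalerBr sum_ell_scale_eq0 sum_ell_eq0 scale0r subr0. Qed.

Lemma barycentric_kernel (a : nat -> R) :
  \sum_(1 <= i < n.+2) a i *: u i = 0 ->
  forall i, (0 < i < n.+2)%N -> a i = (\sum_(1 <= j < n.+2) a j) * ell i.
Proof.
set s := \sum_(1 <= j < n.+2) a j; rewrite sum_scalerBr => /eqP; rewrite subr_eq0 => /eqP ha.
move=> i iN; apply/eqP; rewrite -subr_eq0; apply/eqP; move: i iN.
apply: (affine_dependence_eq0 hY); first by rewrite sumrB -mulr_sumr hsum mulr1 subrr.
under eq_bigr do rewrite scalerBl -scalerA.
by rewrite sumrB -scaler_sumr hbar ha subrr.
Qed.

Lemma Gmx_shift : Gmx ell y = \sum_(0 <= i < n.+2) ell i *: (u i *m (u i)^T).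
Proof.
have entry (v w : 'cV[R]_n) a b : (v *m w^T) a b = v a 0 * w b 0.
  by rewrite !mxE big_ord1 mxE.
have sum_entry a : \sum_(0 <= i < n.+2) ell i * y i a 0 = 0.
  have /matrixP/(_ a 0) := sum_ell_scale_eq0; rewrite summxE mxE => e.
  by rewrite -[RHS]e; apply: eq_bigr => i _; rewrite mxE.
apply/matrixP => a b; rewrite !summxE.
under eq_bigr do rewrite mxE entry.
under [RHS]eq_bigr do rewrite mxE entry !mxE.
transitivity (\sum_(0 <= i < n.+2) (ell i * (y i a 0 * y i b 0) - (ell i * y i a 0) * y 0%N b 0
    - (ell i * y i b 0) * y 0%N a 0 + ell i * (y 0%N a 0 * y 0%N b 0))).
  by rewrite !big_split /= !sumrN -!mulr_suml !sum_entry sum_ell_eq0 !mul0r !subr0 addr0.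
by apply: eq_bigr => i _; ring.
Qed.

Lemma Gmx_kernel (z : 'cV[R]_n) : Gmx ell y *m z = 0 ->
  forall i, (i < n.+2)%N -> ell i != 0 -> (u i)^T *m z = 0.
Proof.
move=> Gz [_ _|i iN ell_i]; first by rewrite subrr trmx0 mul0mx.
pose c j := ((u j)^T *m z) 0 0.
have uz j : (u j)^T *m z = (c j)%:M by rewrite [LHS]mx11_scalar.
have sum_c : \sum_(1 <= j < n.+2) ell j * c j = 0.
  have /matrixP/(_ 0 0) : (\sum_(0 <= j < n.+2) ell j *: u j)^T *m z = 0.
    by rewrite sum_ell_scale_shift_eq0 trmx0 mul0mx.
  rewrite linear_sum mulmx_suml summxE big_ltn // subrr linearZ /= trmx0 scaler0 mul0mx.
  rewrite mxE add0r => e; rewrite -[RHS]e.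
  by apply: eq_bigr => j _; rewrite linearZ -scalemxAl mxE.
have : \sum_(1 <= j < n.+2) (ell j * c j) *: u j = 0.
  rewrite -[RHS]Gz Gmx_shift mulmx_suml [RHS]big_ltn // subrr.
  rewrite mul0mx scaler0 mul0mx add0r; apply: eq_bigr => j _.
  by rewrite -scalemxAl -mulmxA uz mul_mx_scalar scalerA.
move/barycentric_kernel/(_ i.+1 iN); rewrite sum_c mul0r => /eqP.
by rewrite mulf_eq0 (negbTE ell_i) /= uz => /eqP ->; rewrite raddf0.
Qed.

End Barycentric.

Section HstarKernel.
Variables (R : realFieldType) (n : nat) (L : R) (P : 'M[R]_n) (lam : 'rV[R]_n).
Hypothesis hP : P^T *m P = 1%:M.

Lemma Hstar_shift (s : R) :
  L%:M + s *: Hstar L P lam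
  = L *: (P *m diag_mx (\row_r (1 + s * Num.sg (lam 0 r))) *m P^T).
Proof.
have -> : diag_mx (\row_r (1 + s * Num.sg (lam 0 r)))
        = 1%:M + s *: diag_mx (map_mx Num.sg lam).
  by apply/matrixP => i j; rewrite !mxE; case: eqP => _; rewrite ?mulr1n ?mulr0n ?mulr0 ?addr0.
rewrite mulmxDr mulmxDl mulmx1 (mulmx1C hP) /Hstar -scalemxAr -scalemxAl.
by rewrite scalerDr scalemx1 !scalerA mulrC.
Qed.

Lemma Hstar_shift_kill (s : R) q (X : 'M[R]_(n, q)) :
  (forall r, 1 + s * Num.sg (lam 0 r) != 0 -> (col r P)^T *m X = 0) ->
  (L%:M + s *: Hstar L P lam) *m X = 0.
Proof.
move=> hX; rewrite Hstar_shift -scalemxAl -!mulmxA.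
suff -> : diag_mx (\row_r (1 + s * Num.sg (lam 0 r))) *m (P^T *m X) = 0.
  by rewrite mulmx0 scaler0.
apply/matrixP => r c; rewrite mul_diag_mx !mxE.
have [-> | /hX] := eqVneq (1 + s * Num.sg (lam 0 r)) 0; first by rewrite mul0r.
by rewrite tr_col -row_mul => /rowP/(_ c); rewrite !mxE => ->; rewrite mulr0.
Qed.

Lemma Hstar_addr_kill q (X : 'M[R]_(n, q)) :
  (forall r, 0 <= lam 0 r -> (col r P)^T *m X = 0) -> (L%:M + Hstar L P lam) *m X = 0.
Proof.
move=> hX; rewrite -[Hstar _ _ _]scale1r; apply: Hstar_shift_kill => r; rewrite mul1r.
by have [/ltr0_sg ->|lam_ge0] := ltP (lam 0 r) 0; [rewrite subrr eqxx | move=> _; apply: hX].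
Qed.

Lemma Hstar_subr_kill q (X : 'M[R]_(n, q)) :
  (forall r, lam 0 r <= 0 -> (col r P)^T *m X = 0) -> (L%:M - Hstar L P lam) *m X = 0.
Proof.
move=> hX; rewrite -scaleN1r; apply: Hstar_shift_kill => r; rewrite mulN1r.
by have [/gtr0_sg ->|lam_le0] := ltP 0 (lam 0 r); [rewrite subrr eqxx | move=> _; apply: hX].
Qed.

End HstarKernel.

Section Lemma4p3.
Variables (R : realFieldType) (n : nat) (y : nat -> 'cV[R]_n) (ell : nat -> R)
  (L : R) (P : 'M[R]_n) (lam : 'rV[R]_n).
Hypotheses (hY : affinely_independent y)
  (hsum : \sum_(1 <= i < n.+2) ell i = 1)
  (hbar : \sum_(1 <= i < n.+2) ell i *: y i = y 0%N)
  (h0 : ell 0%N = -1)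
  (hord : forall i j : nat, (1 <= i)%N -> (i <= j)%N -> (j <= n.+1)%N -> ell j <= ell i)
  (hP : P^T *m P = 1%:M)
  (hG : Gmx ell y = P *m diag_mx lam *m P^T)
  (hneg : size (negidx lam) = (size (Iminus n ell)).-1)
  (hinv : Yminus y (size (Iminus n ell)).-1 *m Pminus P lam (size (Iminus n ell)).-1
            \in unitmx).

Local Notation p := (size (Iplus n ell)).
Local Notation m := (size (Iminus n ell)).-1.
Local Notation jm c := (n.+2 - m + c)%N.
Local Notation u i := (y i - y 0%N).
Local Notation mu := (Defs.mu ell y P lam).
Local Notation M := (Mmx ell y P lam).
Local Notation G := (Gmx ell y).
Local Notation H := (Hstar L P lam).
Local Notation Yp := (Yplus y p).
Local Notation Ym := (Yminus y m).
Local Notation Pm := (Pminus P lam m).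
Local Notation K := (invmx (Ym *m Pm)).
Local Notation lp := (\row_(k < p) ell k.+1).
Local Notation lm := (\row_(c < m) ell (jm c)).

Lemma Iplus_iota : Iplus n ell = iota 1 p.
Proof.
have -> : Iplus n ell = [seq i <- iota 1 n.+1 | 0 < ell i] by rewrite /Iplus /= h0 ltr0N1.
rewrite filter_iota_prefix ?size_iota // => i j ij jn /lt_le_trans; apply.
by apply: hord; lia.
Qed.

Lemma Iminus_iota : Iminus n ell = 0%N :: iota (n.+2 - m) m.
Proof.
have -> : Iminus n ell = 0%N :: [seq i <- iota 1 n.+1 | ell i < 0].
  by rewrite /Iminus /= h0 ltrN10.
rewrite filter_iota_suffix /= ?size_iota ?add1n // => i j ij jn /(le_lt_trans _); apply.
by apply: hord; lia.
Qed.

Lemma m_leq : (m <= n.+1)%N.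
Proof.
have := count_size (fun i => ell i < 0) (iota 0 n.+2).
by rewrite -size_filter size_iota /Iminus; lia.
Qed.

Lemma mem_Iplus (k : 'I_p) : k.+1 \in Iplus n ell.
Proof. by rewrite [X in _ \in X]Iplus_iota mem_iota; have := ltn_ord k; lia. Qed.

Lemma mem_Iminus (c : 'I_m) : jm c \in Iminus n ell.
Proof.
have := ltn_ord c; have := m_leq.
by rewrite [X in _ \in X]Iminus_iota inE mem_iota; lia.
Qed.

Lemma Iplus_cases i : i \in Iplus n ell -> exists k : 'I_p, i = k.+1.
Proof.
rewrite [X in _ \in X]Iplus_iota mem_iota => iN.
by exists (@Ordinal p i.-1 ltac:(lia)) => /=; lia.
Qed.

Lemma Iminus_cases j : j \in Iminus n ell -> j = 0%N \/ exists c : 'I_m, j = jm c.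
Proof.
have := m_leq; rewrite [X in _ \in X]Iminus_iota inE mem_iota => mn.
case/orP => [/eqP ->|jN]; first by left.
by right; exists (@Ordinal m (j - (n.+2 - m)) ltac:(lia)) => /=; lia.
Qed.

Lemma big_Iplus (V : nmodType) (F : nat -> V) :
  \sum_(i <- Iplus n ell) F i = \sum_(k < p) F k.+1.
Proof. by rewrite {1}Iplus_iota big_iota_ord. Qed.

Lemma big_Iminus (V : nmodType) (F : nat -> V) :
  \sum_(j <- Iminus n ell) F j = F 0%N + \sum_(c < m) F (jm c).
Proof. by rewrite {1}Iminus_iota big_cons big_iota_ord. Qed.

Lemma big_Iminus_neq0 (V : nmodType) (F : nat -> V) :
  \sum_(j <- Iminus n ell | j != 0%N) F j = \sum_(c < m) F (jm c).
Proof.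
rewrite {1}Iminus_iota big_cons eqxx -big_iota_ord big_seq_cond [RHS]big_seq.
by apply: eq_bigl => j; rewrite mem_iota; have := m_leq; case: (j =P 0%N); lia.
Qed.

Lemma big_nat_Iplus_Iminus (V : nmodType) (F : nat -> V) :
  (forall i, ell i = 0 -> F i = 0) ->
  \sum_(0 <= i < n.+2) F i = \sum_(i <- Iplus n ell) F i + \sum_(j <- Iminus n ell) F j.
Proof. exact: big_sign_split. Qed.

Lemma mu_Iminus i (c : 'I_m) : mu i (jm c) = mxget M i.-1 c.
Proof. by have mn := m_leq; rewrite /Defs.mu /= ifN ?addKn //; apply/eqP; lia. Qed.

Lemma mu_0 i : mu i 0%N = ell i - \sum_(c < m) mxget M i.-1 c.
Proof.
rewrite /Defs.mu /= big_Iminus_neq0.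
by congr (_ - _); apply: eq_bigr => c _; rewrite addKn.
Qed.

Lemma mu_Iplus_Iminus (k : 'I_p) (c : 'I_m) : mu k.+1 (jm c) = M k c.
Proof. by rewrite mu_Iminus mxgetE. Qed.

Lemma mu_Iplus_0 (k : 'I_p) : mu k.+1 0%N = ell k.+1 - \sum_(c < m) M k c.
Proof. by rewrite mu_0; under eq_bigr do rewrite mxgetE. Qed.

Lemma sum_mu_Iminus i : \sum_(j <- Iminus n ell) mu i j = ell i.
Proof.
rewrite big_Iminus mu_0.
by under [X in _ + X]eq_bigr do rewrite mu_Iminus; rewrite subrK.
Qed.

Lemma mu_balance (V : lmodType R) (f : nat -> V) :
  \sum_(j <- Iminus n ell) (\sum_(i <- Iplus n ell) mu i j *: f i + ell j *: f j)
  = \sum_(0 <= i < n.+2) ell i *: f i.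
Proof.
rewrite big_split /= exchange_big /=.
under eq_bigr do rewrite -scaler_suml sum_mu_Iminus.
by rewrite -big_nat_Iplus_Iminus // => i ->; rewrite scale0r.
Qed.

Lemma col_trYplus (k : 'I_p) : col k Yp^T = u k.+1.
Proof. by rewrite -tr_row rowK trmxK. Qed.

Lemma col_trYminus (c : 'I_m) : col c Ym^T = u (jm c).
Proof. by rewrite -tr_row rowK trmxK. Qed.

Lemma Gmx_split : G = Yp^T *m diag_mx lp *m Yp + Ym^T *m diag_mx lm *m Ym.
Proof.
rewrite (Gmx_shift hsum hbar h0) big_nat_Iplus_Iminus => [|i ->]; last by rewrite scale0r.
rewrite big_Iplus big_Iminus subrr mul0mx scaler0 add0r !mulmx_tr_diag.
by congr (_ + _); apply: eq_bigr => k _; rewrite rowK trmxK mxE.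
Qed.

Lemma sum_ell_shift_split :
  \sum_(k < p) ell k.+1 *: u k.+1 + \sum_(c < m) ell (jm c) *: u (jm c) = 0.
Proof.
have := sum_ell_scale_shift_eq0 hsum hbar h0.
rewrite big_nat_Iplus_Iminus => [|i ->]; last by rewrite scale0r.
by rewrite big_Iplus big_Iminus subrr scaler0 add0r.
Qed.

Lemma ell_mul_Yplus : lp *m Yp = - (lm *m Ym).
Proof.
apply/eqP; rewrite -addr_eq0; apply/eqP.
have /(congr1 trmx) := sum_ell_shift_split; rewrite trmx0 => e; rewrite -[RHS]e.
rewrite !mulmx_sum_row linearD !linear_sum /=.
by congr (_ + _); apply: eq_bigr => k _; rewrite rowK mxE linearZ.
Qed.

Lemma Yminus_Pminus_inv : Ym *m Pm *m K = 1%:M.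
Proof. exact: mulmxV. Qed.

Lemma inv_Yminus_Pminus : K *m (Ym *m Pm) = 1%:M.
Proof. exact: mulVmx. Qed.

Lemma colsum_Mmx (c : 'I_m) : \sum_(k < p) M k c = - ell (jm c).
Proof.
have ones_diag : const_mx 1 *m diag_mx lp = lp.
  by apply/rowP => k; rewrite mul_mx_diag !mxE mul1r.
have : const_mx 1 *m M = - lm.
  rewrite !mulmxA ones_diag ell_mul_Yplus !mulNmx -mulmxA -mulmxA.
  by rewrite (mulmxA Ym) Yminus_Pminus_inv mulmx1.
move/rowP/(_ c); rewrite !mxE => e; rewrite -[RHS]e.
by apply: eq_bigr => k _; rewrite [const_mx _ _ _]mxE mul1r.
Qed.

Lemma Gmx_tr : G^T = G.
Proof. by rewrite hG !trmx_mul trmxK tr_diag_mx mulmxA. Qed.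

Lemma Gmx_colP r : G *m col r P = lam 0 r *: col r P.
Proof. by rewrite -col_mulmx hG -mulmxA -mulmxA hP mulmx1 col_mul_diag. Qed.

Lemma trcolP_Gmx r : (col r P)^T *m G = lam 0 r *: (col r P)^T.
Proof. by rewrite -Gmx_tr -trmx_mul Gmx_colP linearZ. Qed.

Lemma col_Pminus (c : 'I_m) r : col c Pm = col (nth r (negidx lam) c) P.
Proof. by apply/colP => i; rewrite !mxE (set_nth_default r) // hneg. Qed.

Lemma trcolP_Pminus r : ~~ (lam 0 r < 0) -> (col r P)^T *m Pm = 0.
Proof.
move=> lam_r; apply/rowP => c; rewrite [RHS]mxE.
have : nth r (negidx lam) c \in negidx lam by rewrite mem_nth // hneg.
rewrite mem_filter => /andP [lam_nth _].
transitivity ((P^T *m P) r (nth r (negidx lam) c)).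
  by rewrite !mxE; apply: eq_bigr => t _; rewrite !mxE (set_nth_default r) // hneg.
by rewrite hP mxE; case: eqP => // rE; move: lam_r; rewrite rE lam_nth.
Qed.

Lemma col_Pminus_index r : lam 0 r < 0 -> exists c : 'I_m, col c Pm = col r P.
Proof.
move=> lam_r; have r_neg : r \in negidx lam by rewrite mem_filter lam_r mem_enum.
have cm : (index r (negidx lam) < m)%N by rewrite -hneg index_mem.
by exists (Ordinal cm); rewrite (col_Pminus _ r) nth_index.
Qed.

Lemma MmxE : M = diag_mx lp *m Yp *m Pm *m K.
Proof. by []. Qed.

Local Notation W := (Yp^T *m M + Ym^T *m diag_mx lm).
Local Notation V := (Ym^T *m M^T - Yp^T *m diag_mx lp).

Lemma W_eq : W = G *m Pm *m K.
Proof.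
rewrite Gmx_split !mulmxDl; congr (_ + _); first by rewrite !mulmxA.
by rewrite -!mulmxA (mulmxA Ym) Yminus_Pminus_inv mulmx1.
Qed.

Lemma trPminus_V : Pm^T *m V = 0.
Proof.
have MYP : M *m (Ym *m Pm) = diag_mx lp *m Yp *m Pm.
  by rewrite MmxE -mulmxA inv_Yminus_Pminus mulmx1.
rewrite mulmxBr !mulmxA -!trmx_mul MYP -mulmxA [X in X - _]trmx_mul tr_diag_mx.
by rewrite subrr.
Qed.

Lemma Gmx_kernel_Yplus_Yminus (z : 'cV[R]_n) : G *m z = 0 -> Yp *m z = 0 /\ Ym *m z = 0.
Proof.
move=> Gz; have uz i : i \in Iplus n ell ++ Iminus n ell -> (u i)^T *m z = 0.
  rewrite mem_cat !mem_filter mem_iota => /orP [] /andP [ell_i iN].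
    by apply: (Gmx_kernel hY hsum hbar h0 Gz) => //; rewrite gt_eqF.
  by apply: (Gmx_kernel hY hsum hbar h0 Gz) => //; rewrite lt_eqF.
split; apply/row_matrixP => k; rewrite row_mul rowK row0 uz // mem_cat.
  by rewrite mem_Iplus.
by rewrite mem_Iminus orbT.
Qed.

Lemma W_kill : (L%:M + H) *m W = 0.
Proof.
apply: (Hstar_addr_kill _ hP) => r lam_r.
rewrite W_eq !mulmxA trcolP_Gmx -!scalemxAl trcolP_Pminus -?leNgt //.
by rewrite mul0mx scaler0.
Qed.

Lemma V_kill : (L%:M - H) *m V = 0.
Proof.
apply: (Hstar_subr_kill _ hP) => r.
rewrite le_eqVlt => /orP [/eqP lam_r | /col_Pminus_index [c <-]].
  have [Ypz Ymz] : Yp *m col r P = 0 /\ Ym *m col r P = 0.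
    by apply: Gmx_kernel_Yplus_Yminus; rewrite Gmx_colP lam_r scale0r.
  by rewrite mulmxBr !mulmxA -!trmx_mul Ypz Ymz mulmx0 !trmx0 mul0mx subrr.
by rewrite tr_col -row_mul trPminus_V row0.
Qed.

Lemma col_W (c : 'I_m) :
  col c W = \sum_(i <- Iplus n ell) mu i (jm c) *: y i + ell (jm c) *: y (jm c).
Proof.
rewrite linearD /= col_mulmx_sum col_mul_diag col_trYminus mxE big_Iplus.
under eq_bigr do rewrite col_trYplus.
under [X in _ = X + _]eq_bigr do rewrite mu_Iplus_Iminus.
rewrite sum_scalerBr colsum_Mmx scaleNr opprK scalerBr.
by rewrite addrACA subrr addr0.
Qed.

Lemma col_V (k : 'I_p) :
  col k V = \sum_(j <- Iminus n ell) mu k.+1 j *: y j - ell k.+1 *: y k.+1.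
Proof.
rewrite linearB /= col_mulmx_sum col_mul_diag col_trYplus mxE big_Iminus mu_Iplus_0.
under eq_bigr do rewrite col_trYminus mxE.
rewrite [in RHS](eq_bigr (fun c : 'I_m => M k c *: y (jm c))) => [|c _]; last first.
  by rewrite mu_Iplus_Iminus.
rewrite sum_scalerBr; apply/matrixP => a b; rewrite !(mxE, summxE); ring.
Qed.

Lemma sum_mu_Iplus j : j \in Iminus n ell -> \sum_(i <- Iplus n ell) mu i j = - ell j.
Proof.
have col_case (c : 'I_m) : \sum_(i <- Iplus n ell) mu i (jm c) + ell (jm c) = 0.
  by rewrite big_Iplus; under eq_bigr do rewrite mu_Iplus_Iminus; rewrite colsum_Mmx addNr.
move=> jI; apply/eqP; rewrite -addr_eq0; apply/eqP; move: jI.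
case/Iminus_cases => [->|[c ->]] //.
rewrite big_Iplus; under eq_bigr do rewrite mu_Iplus_0.
rewrite sumrB exchange_big /=; under [X in _ - X]eq_bigr do rewrite colsum_Mmx.
have := sum_ell_eq0 hsum h0; rewrite big_nat_Iplus_Iminus // big_Iplus big_Iminus => e.
by rewrite sumrN opprK -[RHS]e addrAC addrA.
Qed.

Lemma Hstar_subr_mu i : i \in Iplus n ell ->
  (L%:M - H) *m (\sum_(j <- Iminus n ell) mu i j *: y j) = (L%:M - H) *m (ell i *: y i).
Proof.
case/Iplus_cases => k ->; apply/eqP; rewrite -subr_eq0 -mulmxBr.
by rewrite -col_V -col_mulmx V_kill col0.
Qed.

Lemma Hstar_addr_mu j : j \in Iminus n ell ->
  (L%:M + H) *m (\sum_(i <- Iplus n ell) mu i j *: y i) = - ((L%:M + H) *m (ell j *: y j)).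
Proof.
have col_case (c : 'I_m) :
    (L%:M + H) *m (\sum_(i <- Iplus n ell) mu i (jm c) *: y i + ell (jm c) *: y (jm c)) = 0.
  by rewrite -col_W -col_mulmx W_kill col0.
move=> jI; apply/eqP; rewrite -addr_eq0 -mulmxDr; apply/eqP; move: jI.
case/Iminus_cases => [->|[c ->]] //.
have := mu_balance y; rewrite (sum_ell_scale_eq0 hbar h0) big_Iminus.
move/eqP; rewrite addr_eq0 => /eqP ->.
by rewrite mulmxN mulmx_sumr big1 ?oppr0 // => c _; apply: col_case.
Qed.

End Lemma4p3.

Theorem lemma4p3 (R : realFieldType) (n : nat) (y : nat -> 'cV[R]_n)
  (ell : nat -> R) (L : R) (P : 'M[R]_n) (lam : 'rV[R]_n)
  (hY : affinely_independent y)
  (hsum : \sum_(1 <= i < n.+2) ell i = 1)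
  (hbar : \sum_(1 <= i < n.+2) ell i *: y i = y 0%N)
  (h0 : ell 0%N = -1)
  (hord : forall i j : nat, (1 <= i)%N -> (i <= j)%N -> (j <= n.+1)%N -> ell j <= ell i)
  (hL : 0 < L)
  (hP : P^T *m P = 1%:M)
  (hG : Gmx ell y = P *m diag_mx lam *m P^T)
  (hneg : size (negidx lam) = (size (Iminus n ell)).-1)
  (hinv : Yminus y (size (Iminus n ell)).-1 *m Pminus P lam (size (Iminus n ell)).-1
            \in unitmx) :
  let H := Hstar L P lam in
  let mu := mu ell y P lam in
  (forall i, i \in Iplus n ell -> \sum_(j <- Iminus n ell) mu i j = ell i) /\
  (forall j, j \in Iminus n ell -> \sum_(i <- Iplus n ell) mu i j = - ell j) /\
  (forall i, i \in Iplus n ell ->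
     (L%:M - H) *m (\sum_(j <- Iminus n ell) mu i j *: y j) = (L%:M - H) *m (ell i *: y i)) /\
  (forall j, j \in Iminus n ell ->
     (L%:M + H) *m (\sum_(i <- Iplus n ell) mu i j *: y i) = - ((L%:M + H) *m (ell j *: y j))).
Proof.
move=> H mu; split; [|split; [|split]].
- by move=> i _; apply: sum_mu_Iminus.
- by move=> j; apply: sum_mu_Iplus.
- by move=> i; apply: Hstar_subr_mu.
- by move=> j; apply: Hstar_addr_mu.
Qed.
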